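(* Let $G=(V,E)$ be a finite connected graph and $A$ an irreducible, lazy transition matrix on $V$, with $E_A=\{(i,j)\in V\times V:A(i,j)>0\}$. Let $i\in V$. Then there exist a finite integer $s(i)$ and a sequence $(i=i_1,i_2,\dots,i_{s(i)})\in V^{s(i)}$ with $(i_j,i_{j+1})\in E_A$ for all $j$, such that the configuration $$x^{(i)}:=T_{i_{s(i)}}\cdots T_{i_1}(T_i)^{s(i)}x$$ is the same for every initial configuration $x\in S^{(i)}$, and satisfies $\min_{j\in V}x^{(i)}_j\ge-2s(i)$.
   Context: $S=(-\mathbb{N}_0)^V$ is the space of height profiles seen from the maximum, and $S^{(i)}=\{x\in S:x_i=0\}$. For $x\in S$ and $i\in V$, $T_ix\in S$ is obtained by first setting $x'_i=\max\{x_k:\operatorname{dist}(k,i)\le1\}+1$, $x'_j=x_j$ for $j\ne i$ (dist the graph distance in $G$), and then $(T_ix)_j=x'_j-\max_kx'_k$. Irreducible: for all $v\neq v'$ there is $s$ with $A^s(v,v')>0$; lazy: $A(v,v)>0$ for all $v$. *)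

From mathcomp Require Import all_boot all_order all_algebra.
Set Implicit Arguments. Unset Strict Implicit. Unset Printing Implicit Defensive.
Import Order.TTheory GRing.Theory Num.Theory.
Local Open Scope ring_scope.

Definition simple_graph (n : nat) (e : rel 'I_n) : Prop :=
  symmetric e /\ irreflexive e.

Definition connected_graph (n : nat) (e : rel 'I_n) : Prop :=
  forall u v : 'I_n, connect e u v.

Definition transition_matrix (R : numDomainType) (n : nat) (A : 'M[R]_n) : Prop :=
  (forall u v, 0 <= A u v) /\ (forall u, \sum_(v < n) A u v = 1).

Definition irreducible_mx (R : numDomainType) (n : nat) (A : 'M[R]_n) : Prop :=
  forall v v' : 'I_n, v != v' -> exists s : nat, 0 < (A ^+ s) v v'.

Definition lazy_mx (R : numDomainType) (n : nat) (A : 'M[R]_n) : Prop :=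
  forall v : 'I_n, 0 < A v v.

Definition EA (R : numDomainType) (n : nat) (A : 'M[R]_n) : rel 'I_n :=
  fun u v => 0 < A u v.

Definition config (n : nat) := {ffun 'I_n -> int}.

Definition in_S (n : nat) (x : config n) : Prop := forall j, x j <= 0.
Definition in_Si (n : nat) (i : 'I_n) (x : config n) : Prop := in_S x /\ x i = 0.

Definition within1 (n : nat) (e : rel 'I_n) (k i : 'I_n) : bool := (k == i) || e k i.

Definition raise (n : nat) (e : rel 'I_n) (i : 'I_n) (x : config n) : config n :=
  [ffun j => if j == i then (\big[Num.max/x i]_(k | within1 e k i) x k) + 1 else x j].

Definition T (n : nat) (e : rel 'I_n) (i : 'I_n) (x : config n) : config n :=
  let x' := raise e i x in
  [ffun j => x' j - \big[Num.max/x' i]_(k < n) x' k].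

From mathcomp Require Import all_boot all_order all_algebra.
From mathcomp Require Import zify.
Import Order.TTheory GRing.Theory Num.Theory.
Local Open Scope ring_scope.
Set Implicit Arguments. Unset Strict Implicit. Unset Printing Implicit Defensive.

(* [T_v] is "raise [v] above its neighbourhood, then subtract the maximum", and
   raising commutes with adding a constant, so any composite of the [T_v] is the
   same composite of raw raises followed by one global shift; that shift is
   pinned down by the result having maximum 0.  Raising [i] first [s] times puts
   it at height [s], strictly above every other vertex.  From then on keep a set
   [C] of vertices whose heights no longer depend on [x]: they all lie at height
   at least [s], while the others lie at most at the number [t < s] of steps done.
   Raising a vertex next to [C] therefore reads its new height off a vertex of
   [C], so it joins [C].  Because [E_A] is strongly connected and lazy, a walk of
   [E_A] can repeatedly reach the outer endpoint of a [G]-edge leaving [C], until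
   [C = V].  All heights then lie in [[s, 2s]], so the final profile is at least
   [-s]. *)

Lemma bigmax_attained (d : Order.disp_t) (T : orderType d) (I : finType)
    (P : pred I) (F : I -> T) j :
  P j -> exists2 k, P k & \big[Order.max/F j]_(i | P i) F i = F k.
Proof.
move=> Pj; apply: (big_ind (fun y => exists2 k, P k & y = F k)) => //.
- by exists j.
- move=> a b [ka Pa ->] [kb Pb ->]; rewrite maxEle.
  by case: ifP => _; [exists kb | exists ka].
- by move=> k Pk; exists k.
Qed.

Lemma bigmax_addr (R : realDomainType) (I : finType) (P : pred I) (F : I -> R) x c :
  \big[Num.max/x]_(i | P i) F i + c = \big[Num.max/x + c]_(i | P i) (F i + c).
Proof. by rewrite (big_morph (+%R^~ c) (fun a b => addr_maxl a b c) erefl). Qed.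

Section Toppling.
Variables (n : nat) (e : rel 'I_n).
Implicit Types (h x : config n) (v : 'I_n) (C : {set 'I_n}).

Definition shift h (c : int) : config n := [ffun j => h j + c].

Lemma shift0 h : shift h 0 = h.
Proof. by apply/ffunP => j; rewrite ffunE addr0. Qed.

Lemma shiftA h c1 c2 : shift (shift h c1) c2 = shift h (c1 + c2).
Proof. by apply/ffunP => j; rewrite !ffunE addrA. Qed.

Definition normalized h := (forall j, h j <= 0) /\ exists k, h k = 0.

Lemma normalized_shift_inj h c1 c2 :
  normalized (shift h c1) -> normalized (shift h c2) -> c1 = c2.
Proof.
move=> [le1 [k1 h1]] [le2 [k2 h2]].
by have := le1 k2; have := le2 k1; rewrite !ffunE in h1 h2 *; lia.
Qed.

Lemma normalized_shift_ge h c (lo hi : int) :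
  normalized (shift h c) -> (forall j, lo <= h j <= hi) ->
  forall j, lo - hi <= shift h c j.
Proof.
move=> [_ [k hk]] hb j; rewrite !ffunE in hk *.
by have := hb j; have := hb k; lia.
Qed.

Definition nbhd_max h v := \big[Num.max/h v]_(k | within1 e k v) h k.

Lemma within1_refl v : within1 e v v.
Proof. by rewrite /within1 eqxx. Qed.

Lemma le_nbhd_max h v k : within1 e k v -> h k <= nbhd_max h v.
Proof. exact: (@le_bigmax_cond _ _ _ (h v) k (fun k => within1 e k v)). Qed.

Lemma nbhd_max_le h v m : (forall k, within1 e k v -> h k <= m) -> nbhd_max h v <= m.
Proof. by move=> hm; apply: bigmax_le => //; apply/hm/within1_refl. Qed.

Lemma nbhd_max_attained h v : exists2 k, within1 e k v & nbhd_max h v = h k.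
Proof. exact/bigmax_attained/within1_refl. Qed.

Lemma raiseE v h j : raise e v h j = if j == v then nbhd_max h v + 1 else h j.
Proof. by rewrite ffunE. Qed.

Lemma nbhd_max_shift h v c : nbhd_max (shift h c) v = nbhd_max h v + c.
Proof. by rewrite /nbhd_max bigmax_addr ffunE; apply: eq_bigr => k _; rewrite ffunE. Qed.

Lemma raise_shift v h c : raise e v (shift h c) = shift (raise e v h) c.
Proof.
apply/ffunP => j; rewrite raiseE !ffunE nbhd_max_shift.
by case: eqP => // _; rewrite addrAC.
Qed.

Lemma T_shift_raise v h :
  T e v h = shift (raise e v h) (- \big[Num.max/raise e v h v]_(k < n) raise e v h k).
Proof. by apply/ffunP => j; rewrite !ffunE. Qed.

Lemma T_normalized v h : normalized (T e v h).
Proof.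
rewrite T_shift_raise; split=> [j|]; first by rewrite ffunE subr_le0 le_bigmax.
have [k _ ->] := bigmax_attained (raise e v h) (erefl : predT v).
by exists k; rewrite ffunE subrr.
Qed.

Lemma T_shift v h c : T e v (shift h c) = T e v h.
Proof.
rewrite !T_shift_raise raise_shift shiftA; congr shift.
rewrite (eq_bigr (fun k => raise e v h k + c)) => [|k _]; last by rewrite ffunE.
by rewrite ffunE -bigmax_addr opprD addrCA subrr addr0.
Qed.

Lemma foldl_raise_shift L h c :
  foldl (fun z k => raise e k z) (shift h c) L =
  shift (foldl (fun z k => raise e k z) h L) c.
Proof. by elim: L h => //= v L IH h; rewrite raise_shift IH. Qed.

Lemma foldl_T_shift L h : exists c,
  foldl (fun z k => T e k z) h L = shift (foldl (fun z k => raise e k z) h L) c.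
Proof.
elim: L h => [|v L IH] h /=; first by exists 0; rewrite shift0.
have [c ->] := IH (T e v h).
by rewrite T_shift_raise foldl_raise_shift shiftA; eexists.
Qed.

Lemma iter_T_shift v t h : exists c, iter t (T e v) h = shift (iter t (raise e v) h) c.
Proof.
elim: t => [|t [c IH]] /=; first by exists 0; rewrite shift0.
by rewrite IH T_shift T_shift_raise; eexists.
Qed.

Lemma foldl_T_normalized v L h : normalized (foldl (fun z k => T e k z) h (v :: L)).
Proof. by elim: L v h => [|u L IH] v h /=; [apply: T_normalized | apply: IH]. Qed.

Lemma iter_raise_in_Si i t x : in_Si i x ->
  iter t (raise e i) x = [ffun j => if j == i then t%:Z else x j].
Proof.
move=> [x_le0 xi0]; elim: t => [|t /= ->].
  by apply/ffunP => j; rewrite ffunE; case: eqP => // ->.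
have peak_i : nbhd_max [ffun j => if j == i then t%:Z else x j] i = t%:Z.
  apply/le_anti/andP; split.
    apply: nbhd_max_le => k _; rewrite ffunE.
    by case: eqP => // _; apply: le_trans (x_le0 k) _.
  have := le_nbhd_max [ffun j => if j == i then t%:Z else x j] (within1_refl i).
  by rewrite ffunE eqxx.
apply/ffunP => j; rewrite raiseE peak_i !ffunE; case: eqP => // _; lia.
Qed.

Definition grow (C : {set 'I_n}) v :=
  if [exists k in C, within1 e k v] then v |: C else C.

Lemma grow_sub C v : C \subset grow C v.
Proof. by rewrite /grow; case: ifP => // _; apply: subsetUr. Qed.

Lemma grow_adj C u v : u \in C -> within1 e u v -> grow C v = v |: C.
Proof. by move=> uC uv; rewrite /grow ifT //; apply/existsP; exists u; rewrite uC. Qed.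

Lemma foldl_grow_sub C L : C \subset foldl grow C L.
Proof. by elim: L C => //= v L IH C; apply: subset_trans (grow_sub C v) (IH _). Qed.

Lemma connect_exit C c d : c \in C -> d \notin C -> connect e c d ->
  exists u v, [/\ u \in C, v \notin C & e u v].
Proof.
move=> + dC /connectP [p]; elim: p c => [|y p IH] c cC /=.
  by move=> _ dc; rewrite dc cC in dC.
case/andP=> cy py dl; have [yC|yC] := boolP (y \in C); first exact: IH yC py dl.
by exists c, y.
Qed.

Lemma grow_walk (E : rel 'I_n) : connected_graph e ->
  (forall u w, connect E u w) -> (forall v, E v v) ->
  forall C c cur, c \in C -> exists2 p, path E cur p & foldl grow C p = setT.
Proof.
move=> e_conn E_conn E_refl C c cur; have [N] := ubnP #|~: C|.
elim: N => // N IH in C c cur *; rewrite ltnS => CN cC.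
have [CT | /subsetPn [d _ dC]] := boolP (setT \subset C).
  by exists [::] => //; apply/eqP; rewrite eqEsubset subsetT CT.
have [u [v [uC vC uv]]] := connect_exit cC dC (e_conn c d).
have /connectP [p Ep vp] := E_conn cur v.
set D := foldl grow C (rcons p v).
have vCD : v |: C \subset D.
  have uCp := subsetP (foldl_grow_sub C p) u uC.
  rewrite /D -cats1 foldl_cat /= (grow_adj uCp) ?setUS ?foldl_grow_sub //.
  by rewrite /within1 uv orbT.
have vD : v \in D by apply: (subsetP vCD); rewrite setU11.
have DN : (#|~: D| < N)%N.
  apply: leq_trans CN; apply/proper_card/properP; split.
    by rewrite setCS (subset_trans (subsetUr _ _) vCD).
  by exists v; rewrite !inE ?vD.
have [q Eq qT] := IH D v v DN vD.
exists (rcons p v ++ q); last by rewrite foldl_cat.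
by rewrite cat_path rcons_path Ep -vp E_refl last_rcons.
Qed.

End Toppling.

Section Layers.
Variables (n : nat) (e : rel 'I_n) (s : nat).
Implicit Types (h : config n) (C : {set 'I_n}).

(* [t] is the number of raises performed so far in a sweep of [s] raises. *)
Definition layered (t : nat) C h :=
  [/\ forall c, c \in C -> s%:Z <= h c,
      forall d, d \notin C -> h d <= t%:Z &
      forall k, h k <= (s + t)%N%:Z].

Lemma nbhd_max_attained_in t C h u v : (t < s)%N -> layered t C h ->
  u \in C -> within1 e u v ->
  exists2 k, k \in C /\ within1 e k v & nbhd_max e h v = h k.
Proof.
move=> ts [hC hD _] uC uv; have [k kv hk] := nbhd_max_attained e h v.
exists k => //; split=> //; apply/negPn/negP => kC.
by have := hD k kC; have := hC u uC; have := le_nbhd_max h uv; rewrite hk; lia.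
Qed.

Lemma layered_raise t C h v : (t < s)%N -> layered t C h ->
  layered t.+1 (grow e C v) (raise e v h).
Proof.
move=> ts hL; have [hC hD hK] := hL; rewrite /grow.
case: existsP => [[u /andP [uC uv]] | no_adj].
  have [k [kC _] hk] := nbhd_max_attained_in ts hL uC uv.
  split=> [c | d | k'].
  - rewrite raiseE in_setU1; case: eqP => [_ _ | _ /hC]; last by [].
    by have := hC k kC; rewrite hk; lia.
  - rewrite raiseE in_setU1 negb_or => /andP [/negbTE -> /hD]; lia.
  - by rewrite raiseE hk; case: eqP => _; have := hK k'; have := hK k; lia.
have vC : v \notin C by apply/negP => vC; apply: no_adj; exists v; rewrite vC within1_refl.
have nb_t : nbhd_max e h v <= t%:Z.
  apply: nbhd_max_le => k kv; apply: hD; apply/negP => kC.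
  by apply: no_adj; exists k; rewrite kC.
split=> [c cC | d dC | k]; rewrite raiseE.
- by case: eqP => [cv | _]; [rewrite -cv cC in vC | apply: hC].
- by case: eqP => _; [| have := hD d dC]; lia.
- by case: eqP => _; [| have := hK k]; lia.
Qed.

Lemma agree_raise t C h1 h2 v : (t < s)%N -> layered t C h1 -> layered t C h2 ->
  {in C, h1 =1 h2} -> {in grow e C v, raise e v h1 =1 raise e v h2}.
Proof.
move=> ts h1L h2L h12; rewrite /grow.
case: existsP => [[u /andP [uC uv]] | no_adj].
  have [k1 [k1C k1v] hk1] := nbhd_max_attained_in ts h1L uC uv.
  have [k2 [k2C k2v] hk2] := nbhd_max_attained_in ts h2L uC uv.
  have nb12 : nbhd_max e h1 v = nbhd_max e h2 v.
    have := le_nbhd_max h1 k2v; have := le_nbhd_max h2 k1v.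
    by rewrite hk1 hk2 (h12 _ k1C) (h12 _ k2C); lia.
  by move=> c; rewrite !raiseE in_setU1 nb12; case: eqP => // _ /h12.
have vC : v \notin C by apply/negP => vC; apply: no_adj; exists v; rewrite vC within1_refl.
by move=> c cC; rewrite !raiseE; case: eqP => [cv | _]; [rewrite -cv cC in vC | apply: h12].
Qed.

Lemma layered_foldl t C h L : (t + size L <= s)%N -> layered t C h ->
  layered (t + size L) (foldl (grow e) C L) (foldl (fun z k => raise e k z) h L).
Proof.
elim: L t C h => [|v L IH] t C h /=; first by rewrite addn0.
by move=> tLs hL; rewrite -addSnnS; apply/IH/layered_raise => //; lia.
Qed.

Lemma agree_foldl t C h1 h2 L : (t + size L <= s)%N ->
  layered t C h1 -> layered t C h2 -> {in C, h1 =1 h2} ->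
  {in foldl (grow e) C L,
    foldl (fun z k => raise e k z) h1 L =1 foldl (fun z k => raise e k z) h2 L}.
Proof.
elim: L t C h1 h2 => [|v L IH] t C h1 h2 //= tLs h1L h2L h12.
have ts : (t < s)%N by lia.
apply: (IH t.+1); [lia | exact: layered_raise | exact: layered_raise |].
exact: (agree_raise ts h1L h2L h12).
Qed.

End Layers.

Section Sweep.
Variables (n : nat) (e : rel 'I_n) (i : 'I_n).
Implicit Types (x : config n) (L : seq 'I_n).

Definition sweep L x := foldl (fun z k => raise e k z) (iter (size L) (raise e i) x) L.

Lemma T_sweep_normalized v L x : exists2 c,
    foldl (fun z k => T e k z) (iter (size (v :: L)) (T e i) x) (v :: L) =
      shift (sweep (v :: L) x) c &
    normalized (shift (sweep (v :: L) x) c).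
Proof.
have [c1 ->] := iter_T_shift e i (size (v :: L)) x.
set h := shift (iter (size (v :: L)) (raise e i) x) c1.
have [c2 T_eq] := foldl_T_shift e (v :: L) h.
exists (c1 + c2); first by rewrite T_eq foldl_raise_shift shiftA.
by rewrite /sweep -shiftA -foldl_raise_shift -T_eq; apply: foldl_T_normalized.
Qed.

Lemma layered_iter_raise L x : in_Si i x ->
  layered (size L) 0 [set i] (iter (size L) (raise e i) x).
Proof.
move=> xS; have [x_le0 _] := xS; rewrite iter_raise_in_Si //.
split=> [c | d | k]; rewrite ffunE ?in_set1.
- by move=> /eqP ->; rewrite eqxx.
- by move=> /negbTE ->; apply: x_le0.
- by case: eqP => _; [| apply: le_trans (x_le0 k) _]; lia.
Qed.

Variable L : seq 'I_n.
Hypothesis L_covers : foldl (grow e) [set i] L = setT.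

Lemma sweep_bounds x : in_Si i x ->
  forall j, (size L)%:Z <= sweep L x j <= 2 * (size L)%:Z.
Proof.
move=> xS j.
have [+ _ hK] := @layered_foldl _ e (size L) 0 _ _ _ (leqnn _) (layered_iter_raise L xS).
by rewrite /sweep L_covers => /(_ j (in_setT j)); have := hK j; lia.
Qed.

Lemma sweep_eq x1 x2 : in_Si i x1 -> in_Si i x2 -> sweep L x1 = sweep L x2.
Proof.
move=> x1S x2S; apply/ffunP => j.
apply: (@agree_foldl _ e (size L) 0 _ _ _ L (leqnn _)
  (layered_iter_raise L x1S) (layered_iter_raise L x2S)).
  by move=> c; rewrite in_set1 => /eqP ->; rewrite !iter_raise_in_Si // !ffunE eqxx.
by rewrite L_covers in_setT.
Qed.

End Sweep.

Lemma mxpow_gt0_connect (R : realDomainType) n (A : 'M[R]_n) s u w :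
  (forall u v, 0 <= A u v) -> 0 < (A ^+ s) u w -> connect (EA A) u w.
Proof.
move=> A_ge0; elim: s w => [|s IH] w.
  by rewrite expr0 mxE; case: eqP => [->|_]; rewrite ?connect0 ?ltxx.
rewrite exprSr -mulmxE mxE => sum_gt0.
have [k prod_gt0] : exists k, 0 < (A ^+ s) u k * A k w.
  apply/existsP; apply: contraLR sum_gt0 => /existsPn no_pos.
  by rewrite -leNgt; apply: sumr_le0 => k _; rewrite leNgt no_pos.
have Akw : 0 < A k w.
  by rewrite lt_def A_ge0 andbT; apply: contraTneq prod_gt0 => ->; rewrite mulr0 ltxx.
by rewrite pmulr_lgt0 // in prod_gt0; apply: connect_trans (IH _ prod_gt0) (connect1 Akw).
Qed.

Lemma irreducible_connect (R : realDomainType) n (A : 'M[R]_n) :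
  transition_matrix A -> irreducible_mx A -> forall u w, connect (EA A) u w.
Proof.
move=> [A_ge0 _] A_irr u w; have [->|uw] := eqVneq u w; first exact: connect0.
by have [s] := A_irr u w uw; apply: mxpow_gt0_connect.
Qed.

Theorem mainTheorem8 (R : realFieldType) (n : nat) (e : rel 'I_n) (A : 'M[R]_n)
    (i : 'I_n) :
  simple_graph e -> connected_graph e ->
  transition_matrix A -> irreducible_mx A -> lazy_mx A ->
  exists rest : seq 'I_n,
    path (EA A) i rest /\
    exists y : config n,
      (forall x : config n, in_Si i x ->
         foldl (fun z k => T e k z) (iter (size rest).+1 (T e i) x) (i :: rest) = y) /\
      (forall j : 'I_n, - (2 * ((size rest).+1)%:Z) <= y j).
Proof.
move=> _ e_conn A_stoch A_irr A_lazy.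
have [rest A_rest rest_covers] :=
  grow_walk e_conn (irreducible_connect A_stoch A_irr) A_lazy i (set11 i).
have L_covers : foldl (grow e) [set i] (i :: rest) = setT.
  by rewrite /= (grow_adj (set11 i) (within1_refl e i)) setUid rest_covers.
exists rest; split=> //.
pose x0 : config n := [ffun=> 0].
have x0S : in_Si i x0 by split=> [j|]; rewrite ffunE.
have [c0 _ T0_norm] := T_sweep_normalized e i i rest x0.
exists (shift (sweep e i (i :: rest) x0) c0); split=> [x xS | j].
  have [c -> Tx_norm] := T_sweep_normalized e i i rest x.
  rewrite (sweep_eq L_covers xS x0S) in Tx_norm *.
  by rewrite (normalized_shift_inj Tx_norm T0_norm).
by have := normalized_shift_ge T0_norm (sweep_bounds L_covers x0S) j; rewrite /=; lia.
Qed.
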